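(* Let $C=\{c_1,\dots,c_m\}\subset\mathbb{R}$ with $c_1\le\dots\le c_m$, let $\mathcal{I}$ be a finite set of closed intervals in $\mathbb{R}$ and $f\ge0$ an integer such that every $I\in\mathcal{I}$ satisfies $|I\cap C|>f$. Let $T$ be the output of the following greedy procedure: start with $T=\emptyset$; for $t=1,2,\dots,m$ in this order, if there exist indices $i,j$ with $1\le i\le t\le j\le m$ such that $\delta_{i,j}(f)\ge|T\cap C_{i,j}|+(j-t+1)$ (with $T$ the current set), add $c_t$ to $T$. Then $|T\cap C_{i,j}|\ge\delta_{i,j}(f)$ for all $1\le i\le j\le m$.
   Context: For a set of points $X$, a set of intervals is $X$-disjoint if every point of $X$ lies in at most one of its intervals. For $1\le i\le j\le m$: $C_{i,j}=\{c_i,\dots,c_j\}$; $\mathcal{I}_{i,j}=\{I\in\mathcal{I}: I\cap C\subseteq C_{i,j}\}$; for $J\subseteq C_{i,j}$, $\delta_{i,j}(J)$ is the maximum size of a $(C_{i,j}\setminus J)$-disjoint subset of $\mathcal{I}_{i,j}$; and $\delta_{i,j}(f)=\max_{J\subseteq C_{i,j},|J|\le f}\delta_{i,j}(J)$. *)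

From mathcomp Require Import all_boot all_order all_algebra.
From mathcomp Require Import finmap.
Set Implicit Arguments. Unset Strict Implicit. Unset Printing Implicit Defensive.
Import Order.TTheory GRing.Theory Num.Theory.
Local Open Scope fset_scope.
Local Open Scope ring_scope.

Section Defs.
Variable R : realFieldType.

(* A closed interval [a,b] is represented by the pair (a,b). *)
Definition in_interval (x : R) (I : R * R) : bool := (I.1 <= x) && (x <= I.2).

(* the point set C_{i,j} = {c_i, ..., c_j} (1-based indices) *)
Definition Cset (c : nat -> R) (i j : nat) : {fset R} :=
  seq_fset tt [seq c k | k <- iota i (j.+1 - i)%N].

Definition icap (I : R * R) (X : {fset R}) : {fset R} :=
  [fset x in X | in_interval x I].

Definition disjoint_on (X : {fset R}) (S : {fset (R * R)}) : bool :=
  [forall x : X, #|` [fset I in S | in_interval (val x) I] | <= 1]%N.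

Definition Iset (c : nat -> R) (m : nat) (Ints : {fset (R * R)}) (i j : nat)
  : {fset (R * R)} :=
  [fset I in Ints | icap I (Cset c 1 m) `<=` Cset c i j].

Definition deltaJ (c : nat -> R) (m : nat) (Ints : {fset (R * R)}) (i j : nat)
  (J : {fset R}) : nat :=
  (\max_(S <- fpowerset (Iset c m Ints i j) | disjoint_on (Cset c i j `\` J) S)
     #|` S |)%N.

Definition delta (c : nat -> R) (m : nat) (Ints : {fset (R * R)}) (i j f : nat)
  : nat :=
  (\max_(J <- fpowerset (Cset c i j) | (#|` J | <= f)%N) deltaJ c m Ints i j J)%N.

Definition greedy_step (c : nat -> R) (m : nat) (Ints : {fset (R * R)}) (f : nat)
  (T : {fset R}) (t : nat) : {fset R} :=
  if has (fun i => has (fun j =>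
        (#|` T `&` Cset c i j | + (j.+1 - t) <= delta c m Ints i j f)%N)
        (iota t (m.+1 - t))) (iota 1 t)
  then c t |` T else T.

Definition greedy (c : nat -> R) (m : nat) (Ints : {fset (R * R)}) (f : nat)
  : {fset R} :=
  foldl (greedy_step c m Ints f) fset0 (iota 1 m).

End Defs.

From mathcomp Require Import all_boot all_order all_algebra.
From mathcomp Require Import finmap zify.
Import Order.TTheory GRing.Theory Num.Theory.
Local Open Scope fset_scope.
Local Open Scope ring_scope.

(* Write δ_{i,j} for δ_{i,j}(f). Adding the point c_{j+1} raises δ by at most
   one, and only if c_{j+1} is new: an interval of I_{i,j+1} outside I_{i,j}
   contains c_{j+1}, and two such intervals of a (C_{i,j+1} \ J)-disjoint family
   would both contain the larger of their points outside J (each has one since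
   |I ∩ C| > f >= |J|), so there is at most one. When the greedy procedure skips
   c_t, its test at (i,t) failed, i.e. δ_{i,t} <= |T ∩ C_{i,t}| already; when it
   takes c_t, the count |T ∩ C_{i,t}| gains what δ may gain. *)

Section Intervals.
Set Implicit Arguments.
Unset Strict Implicit.
Variable R : realFieldType.

Lemma in_interval_between (I : R * R) a x b :
  in_interval a I -> in_interval b I -> a <= x -> x <= b -> in_interval x I.
Proof.
rewrite /in_interval => /andP[Ia _] /andP[_ bI] ax xb.
by rewrite (le_trans Ia ax) (le_trans xb bI).
Qed.

Lemma icapP (I : R * R) (X : {fset R}) x :
  (x \in icap I X) = (x \in X) && in_interval x I.
Proof. by rewrite !inE. Qed.

Lemma disjoint_onP (X : {fset R}) (S : {fset (R * R)}) x A B :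
  disjoint_on X S -> x \in X -> A \in S -> B \in S ->
  in_interval x A -> in_interval x B -> A = B.
Proof.
move=> /forallP dis Xx SA SB xA xB; have /= := dis [` Xx].
apply: contraTeq => AB; rewrite -ltnNge.
apply: leq_trans (fsubset_leq_card (_ : [fset A; B] `<=` _)); first by rewrite cardfs2 AB.
by apply/fsubsetP => I; rewrite !inE => /orP[] /eqP ->; rewrite ?SA ?SB.
Qed.

Lemma disjoint_onS (X Y : {fset R}) (S S' : {fset (R * R)}) :
  X `<=` Y -> S' `<=` S -> disjoint_on Y S -> disjoint_on X S'.
Proof.
move=> XY S'S /forallP dis; apply/forallP => -[x Xx] /=.
apply: leq_trans (dis [` fsubsetP XY x Xx]); apply: fsubset_leq_card.
by apply/fsubsetP => I; rewrite !inE => /andP[/(fsubsetP S'S) -> ->].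
Qed.

End Intervals.

Section Delta.
Set Implicit Arguments.
Unset Strict Implicit.
Variables (R : realFieldType) (m : nat) (c : nat -> R).
Variables (Ints : {fset (R * R)}) (f : nat).
Hypothesis c_sorted : forall k, (1 <= k)%N -> (k < m)%N -> c k <= c k.+1.
Hypothesis Ints_large :
  forall I, I \in Ints -> (f < #|` icap I (Cset c 1 m)|)%N.

Lemma CsetP i j x :
  reflect (exists2 k, (i <= k <= j)%N & x = c k) (x \in Cset c i j).
Proof.
rewrite /Cset seq_fsetE; apply: (iffP mapP) => [[k]|[k ikj ->]].
  by rewrite mem_iota => ikj ->; exists k => //; lia.
by exists k => //; rewrite mem_iota; lia.
Qed.

Lemma CsetSr i j : (i <= j.+1)%N -> Cset c i j.+1 = c j.+1 |` Cset c i j.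
Proof.
move=> ij; apply/fsetP => x; rewrite in_fset1U.
apply/CsetP/orP => [[k ikj ->]|[/eqP ->|/CsetP[k ikj ->]]].
- have [-> | kj] := eqVneq k j.+1; [left | right; apply/CsetP; exists k] => //; lia.
- by exists j.+1; rewrite ?ij ?leqnn.
- by exists k => //; lia.
Qed.

Lemma IsetP i j I :
  (I \in Iset c m Ints i j) = (I \in Ints) && (icap I (Cset c 1 m) `<=` Cset c i j).
Proof. by rewrite !inE. Qed.

Lemma Cset_le_last i j p :
  (1 <= i)%N -> (j <= m)%N -> p \in Cset c i j -> p <= c j.
Proof.
move=> i1 jm /CsetP[k /andP[ik kj] ->]; elim: j kj jm => [|j IH] kj jm; first lia.
have [-> //|kj'] := eqVneq k j.+1.
by apply: le_trans (IH _ _) (c_sorted _ _); lia.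
Qed.

Lemma Iset_free_point i j (J : {fset R}) I :
  (#|` J| <= f)%N -> I \in Iset c m Ints i j ->
  exists2 p, p \in Cset c i j `\` J & in_interval p I.
Proof.
rewrite IsetP => Jf /andP[IInts sub].
have /fsubsetPn[p pI pJ] : ~~ (icap I (Cset c 1 m) `<=` J).
  by apply/negP => /fsubset_leq_card; have := Ints_large IInts; lia.
exists p; last by move: pI; rewrite icapP => /andP[].
by rewrite in_fsetD pJ (fsubsetP sub).
Qed.

Lemma disjoint_on_ub_uniq i j (J : {fset R}) S x A B :
  (#|` J| <= f)%N -> S `<=` Iset c m Ints i j ->
  disjoint_on (Cset c i j `\` J) S -> (forall p, p \in Cset c i j -> p <= x) ->
  A \in S -> B \in S -> in_interval x A -> in_interval x B -> A = B.
Proof.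
move=> Jf SI dis ub SA SB xA xB.
have [pA CpA pAA] := Iset_free_point Jf (fsubsetP SI A SA).
have [pB CpB pBB] := Iset_free_point Jf (fsubsetP SI B SB).
wlog le_pAB : A B pA pB SA SB xA xB CpA CpB pAA pBB / pA <= pB.
  move=> gen; have [|/ltW] := leP pA pB; first exact: gen.
  by move=> lt_pBA; apply/esym/(gen B A pB pA).
apply: (disjoint_onP dis CpB SA SB _ pBB).
apply: in_interval_between pAA xA le_pAB _.
by apply: ub; move: CpB; rewrite in_fsetD => /andP[].
Qed.

Lemma delta_eq0 i j : (j < i)%N -> delta c m Ints i j f = 0%N.
Proof.
move=> ji; apply/eqP; rewrite -leqn0.
apply/bigmax_leqP_seq => J _ Jf; apply/bigmax_leqP_seq => S.
rewrite fpowersetE => SI _; rewrite leqNgt cardfs_gt0.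
apply/negP => /fset0Pn[I /(fsubsetP SI)/(Iset_free_point Jf)[p]].
by rewrite in_fsetD => /andP[_ /CsetP[k ikj _]]; lia.
Qed.

Lemma leq_card_delta i j (J : {fset R}) S :
  (#|` J| <= f)%N -> S `<=` Iset c m Ints i j ->
  disjoint_on (Cset c i j `\` J) S -> (#|` S| <= delta c m Ints i j f)%N.
Proof.
move=> Jf SI dis; apply: leq_trans (leq_bigmax_seq (J `&` Cset c i j) _ _).
- apply: (leq_bigmax_seq S); first by rewrite fpowersetE.
  by rewrite fsetDIr fsetDv fsetU0.
- by rewrite fpowersetE fsubsetIr.
- exact: leq_trans (fsubset_leq_card (fsubsetIl _ _)) Jf.
Qed.

Lemma IsetSr_new i j I :
  (i <= j.+1)%N -> I \in Iset c m Ints i j.+1 -> I \notin Iset c m Ints i j ->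
  in_interval (c j.+1) I /\ c j.+1 \notin Cset c i j.
Proof.
move=> ij; rewrite !IsetP (CsetSr ij) => /andP[-> sub] /fsubsetPn[x xI xC].
move: (fsubsetP sub x xI); rewrite in_fset1U (negbTE xC) orbF => /eqP xj.
by move: xI xC; rewrite icapP xj => /andP[_ ->].
Qed.

Lemma leq_deltaSr i j : (1 <= i)%N -> (i <= j.+1)%N -> (j.+1 <= m)%N ->
  (delta c m Ints i j.+1 f <= delta c m Ints i j f + (c j.+1 \notin Cset c i j))%N.
Proof.
move=> i1 ij jm; apply/bigmax_leqP_seq => J _ Jf.
apply/bigmax_leqP_seq => S; rewrite fpowersetE => SI dis.
rewrite -(cardfsID (Iset c m Ints i j) S); apply: leq_add.
  apply: leq_card_delta Jf (fsubsetIr _ _) _.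
  apply: disjoint_onS dis; last exact: fsubsetIl.
  by apply: fsetSD; rewrite (CsetSr ij) fsubsetU1.
have new I : I \in S `\` Iset c m Ints i j ->
    in_interval (c j.+1) I /\ c j.+1 \notin Cset c i j.
  by rewrite in_fsetD => /andP[I_new /(fsubsetP SI) I_in]; exact: IsetSr_new.
have [Cj|_] /= := boolP (c j.+1 \in Cset c i j).
  rewrite leqn0 cardfs_eq0; apply/eqP/fsetP => I; rewrite in_fset0.
  by apply/negbTE/negP => /new[_]; rewrite Cj.
have [->|[I0 I0S]] := fset_0Vmem (S `\` Iset c m Ints i j); first by rewrite cardfs0.
rewrite -(cardfs1 I0); apply/fsubset_leq_card/fsubsetP => I IS; rewrite inE.
have inS K : K \in S `\` Iset c m Ints i j -> K \in S by rewrite in_fsetD => /andP[].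
have ub p : p \in Cset c i j.+1 -> p <= c j.+1 by apply: Cset_le_last.
apply/eqP/(disjoint_on_ub_uniq Jf SI dis ub (inS _ IS) (inS _ I0S)).
  by case: (new I IS).
by case: (new I0 I0S).
Qed.

Lemma greedy_step_skip T t i : (1 <= i <= t)%N -> (t <= m)%N ->
  c t \notin greedy_step c m Ints f T t ->
  (delta c m Ints i t f <= #|` T `&` Cset c i t|)%N.
Proof.
move=> it tm; rewrite /greedy_step; case: ifP => [_|/hasPn step _].
  by rewrite fset1U1.
have iI : i \in iota 1 t by rewrite mem_iota; lia.
have tI : t \in iota t (m.+1 - t) by rewrite mem_iota; lia.
by have := hasPn (step i iI) t tI; rewrite subSnn addn1 -leqNgt.
Qed.

Lemma greedy_step_sub T t : T `<=` greedy_step c m Ints f T t.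
Proof. by rewrite /greedy_step; case: ifP => _; rewrite ?fsubsetU1. Qed.

Lemma foldl_greedy_step_sub T s : T `<=` foldl (greedy_step c m Ints f) T s.
Proof.
elim: s T => [|t s IH] T /=; first exact: fsubset_refl.
exact: fsubset_trans (greedy_step_sub T t) (IH _).
Qed.

Lemma greedy_skip i t : (1 <= i <= t)%N -> (t <= m)%N ->
  c t \notin greedy c m Ints f ->
  (delta c m Ints i t f <= #|` greedy c m Ints f `&` Cset c i t|)%N.
Proof.
move=> it tm; rewrite /greedy.
have -> : iota 1 m = iota 1 t.-1 ++ t :: iota t.+1 (m - t).
  have -> : m = (t.-1 + (m - t).+1)%N by lia.
  by rewrite iotaD /=; congr (_ ++ _ :: iota _ _); lia.
rewrite foldl_cat /=; set T := foldl _ fset0 _.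
have Tsub := foldl_greedy_step_sub (greedy_step c m Ints f T t) (iota t.+1 (m - t)).
move=> /(contra (fsubsetP Tsub _)) /(greedy_step_skip it tm) le_delta.
apply: leq_trans le_delta (fsubset_leq_card (fsetSI _ _)).
exact: fsubset_trans (greedy_step_sub T t) Tsub.
Qed.

Lemma delta_le_greedy i j : (1 <= i)%N -> (j <= m)%N ->
  (delta c m Ints i j f <= #|` greedy c m Ints f `&` Cset c i j|)%N.
Proof.
move=> i1; elim: j => [|j IH] jm; first by rewrite delta_eq0.
have [ji|ij] := ltnP j.+1 i; first by rewrite delta_eq0.
set G := greedy c m Ints f.
have [Gj|] := boolP (c j.+1 \in G); last by apply: greedy_skip; rewrite ?i1.
apply: leq_trans (leq_deltaSr i1 ij jm) _.
apply: leq_trans (fsubset_leq_card (_ : c j.+1 |` (G `&` Cset c i j) `<=` _)).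
  by rewrite cardfsU1 in_fsetI Gj /= addnC leq_add2l IH // ltnW.
rewrite (CsetSr ij); apply/fsubsetP => y; rewrite !inE.
by case/orP => [/eqP ->|/andP[-> ->]]; rewrite ?Gj ?eqxx ?orbT.
Qed.

End Delta.

Theorem lemma7 (R : realFieldType) (m : nat) (c : nat -> R)
  (Ints : {fset (R * R)}) (f : nat)
  (Hsorted : forall k : nat, (1 <= k)%N -> (k < m)%N -> c k <= c k.+1)
  (Hlarge : forall I, I \in Ints -> (f < #|` icap I (Cset c 1 m) |)%N) :
  forall i j : nat, (1 <= i)%N -> (i <= j)%N -> (j <= m)%N ->
    (delta c m Ints i j f <= #|` greedy c m Ints f `&` Cset c i j |)%N.
Proof.
by move=> i j i1 _ jm; apply: delta_le_greedy.
Qed.
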